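(* Let $h>0$, let $(\tau,\mu):\mathbb R\to\mathbb R^2$ be a solution of the system $\tau'=1+K(\tau,\mu)\mu$, $\mu'=-K(\tau,\mu)\tau$, and set $k(s)=K(\tau(s),\mu(s))$. Then $k$ has at most one zero $s_1$; if it has one, then $k<0$ on $(-\infty,s_1)$ and $k>0$ on $(s_1,+\infty)$.
   Context: Fix $h>0$. For $(\tau,\mu)\in\mathbb R^2$ put $r^2=\tau^2+\mu^2$ and define $K:\mathbb R^2\to\mathbb R$ by $$K(\tau,\mu)=\frac{2\big(\tau^2+h^2(1+\mu^2)\big)\tau+(h^2-1)(1+\mu^2)\mu}{(1+r^2)(h^2+r^2)}.$$ Consider the autonomous ODE system $\tau'=1+K(\tau,\mu)\mu$, $\mu'=-K(\tau,\mu)\tau$ for functions $s\mapsto(\tau(s),\mu(s))$; all its solutions are defined on $\mathbb R$. *)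

From Stdlib Require Import Reals.
Open Scope R_scope.

Definition Kfun (h tau mu : R) : R :=
  let r2 := tau ^ 2 + mu ^ 2 in
  (2 * (tau ^ 2 + h ^ 2 * (1 + mu ^ 2)) * tau + (h ^ 2 - 1) * (1 + mu ^ 2) * mu)
  / ((1 + r2) * (h ^ 2 + r2)).

Definition is_solution (h : R) (tau mu : R -> R) : Prop :=
  forall s : R,
    derivable_pt_lim tau s (1 + Kfun h (tau s) (mu s) * mu s) /\
    derivable_pt_lim mu s (- (Kfun h (tau s) (mu s) * tau s)).

(** At a zero of [k] the system gives [tau' = 1] and [mu' = 0], so only the
    [tau]-derivative of the numerator of [K] survives and
    [k' = 2 (3 tau^2 + h^2 (1 + mu^2)) / ((1 + r^2) (h^2 + r^2)) > 0].
    A continuous function whose derivative is positive at each of its zeros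
    can only cross zero upwards, hence at most once. *)

From Stdlib Require Import Reals Lra Classical.
From Coquelicot Require Import Coquelicot.
Open Scope R_scope.

Lemma continuity_pt_close (f : R -> R) (c e : R) :
  continuity_pt f c -> 0 < e ->
  exists d, 0 < d /\ forall y, Rabs (y - c) < d -> Rabs (f y - f c) < e.
Proof.
intros Hc He.
destruct (Hc e He) as [d [Hd Hclose]]; exists d; split; [exact Hd|].
intros y Hy; destruct (Req_dec y c) as [->|Hyc].
- rewrite Rminus_diag, Rabs_R0; exact He.
- apply Hclose; repeat split; auto.
Qed.

Lemma derivable_pt_lim_pos_locally_increasing (f : R -> R) (x l : R) :
  derivable_pt_lim f x l -> 0 < l ->
  exists d, 0 < d /\
    (forall y, x < y < x + d -> f x < f y) /\
    (forall y, x - d < y < x -> f y < f x).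
Proof.
intros Hf Hl; destruct (Hf l Hl) as [d Hd].
exists d; split; [apply cond_pos|].
assert (same_sign : forall y, y <> x -> Rabs (y - x) < d ->
                      0 < (f y - f x) * (y - x)).
{ intros y Hyx Hy.
  assert (Hq := Hd (y - x) ltac:(lra) Hy).
  replace (x + (y - x)) with y in Hq by ring.
  apply Rabs_def2 in Hq.
  replace ((f y - f x) * (y - x)) with ((f y - f x) / (y - x) * (y - x) ^ 2)
    by (field; lra).
  apply Rmult_lt_0_compat; [lra | apply pow2_gt_0; lra]. }
split; intros y Hy;
  assert (P := same_sign y ltac:(lra)
                 ltac:(unfold Rabs; destruct Rcase_abs; lra)); nra.
Qed.

Section UpwardCrossing.

Variable f : R -> R.

Hypothesis pos_right_of_nonneg :
  forall x, 0 <= f x -> exists d, 0 < d /\ forall y, x < y < x + d -> 0 < f y.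
Hypothesis neg_left_of_nonpos :
  forall x, f x <= 0 -> exists d, 0 < d /\ forall y, x - d < y < x -> f y < 0.

Lemma pos_after_nonneg (a b : R) : a < b -> 0 <= f a -> 0 < f b.
Proof.
intros Hab Ha.
set (S := fun x => a <= x <= b /\ forall y, a < y <= x -> 0 < f y).
assert (S_bound : bound S) by (exists b; intros x [Hx _]; lra).
assert (Sa : S a) by (split; [lra | intros y Hy; lra]).
destruct (completeness S S_bound (ex_intro _ a Sa)) as [c [c_ub c_lub]].
assert (Hcb : c <= b) by (apply c_lub; intros x [Hx _]; lra).
assert (S_step : forall x, a <= x < b -> S x -> 0 <= f x -> c > x).
{ intros x Hx Sx Hfx.
  destruct (pos_right_of_nonneg x Hfx) as [d [Hd Hpos]].
  set (x' := Rmin (x + d / 2) b).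
  assert (x < x' <= x + d / 2 /\ x' <= b)
    by (unfold x'; repeat split; [apply Rmin_glb_lt | apply Rmin_l | apply Rmin_r]; lra).
  assert (Sx' : S x').
  { split; [lra|]. intros y Hy.
    destruct (Rle_dec y x); [apply Sx; lra | apply Hpos; lra]. }
  specialize (c_ub x' Sx'); lra. }
assert (Hac : a < c) by (apply S_step; [lra | exact Sa | exact Ha]).
assert (pos_below_c : forall y, a < y < c -> 0 < f y).
{ intros y Hy.
  destruct (classic (exists x, S x /\ y <= x)) as [[x [[_ Sx] Hyx]]|Hnone].
  - apply Sx; lra.
  - assert (c <= y); [|lra].
    apply c_lub; intros x Sx.
    destruct (Rle_dec x y); [assumption|].
    exfalso; apply Hnone; exists x; split; [exact Sx | lra]. }
assert (Hfc : 0 < f c).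
{ destruct (Rlt_dec 0 (f c)) as [|Hfc]; [assumption|].
  destruct (neg_left_of_nonpos c ltac:(lra)) as [d [Hd Hneg]].
  set (y := Rmax a (c - d / 2)).
  assert (a <= y /\ c - d / 2 <= y < c)
    by (unfold y; repeat split; [apply Rmax_l | apply Rmax_r | apply Rmax_lub_lt]; lra).
  destruct (Req_dec y a) as [Hya|Hya].
  - assert (f y < 0) by (apply Hneg; lra).
    assert (f y = f a) by (rewrite Hya; reflexivity); lra.
  - assert (f y < 0) by (apply Hneg; lra).
    assert (0 < f y) by (apply pos_below_c; lra); lra. }
destruct (Req_dec c b) as [<-|Hcb']; [exact Hfc|].
assert (Sc : S c) by (split; [lra | intros y Hy; destruct (Req_dec y c) as [->|];
                                   [exact Hfc | apply pos_below_c; lra]]).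
assert (c > c) by (apply S_step; [lra | exact Sc | lra]); lra.
Qed.

End UpwardCrossing.

Section PositiveDerivativeAtZeros.

Variable f : R -> R.

Hypothesis f_cont : forall x, continuity_pt f x.
Hypothesis f_deriv_pos_at_zeros :
  forall x, f x = 0 -> exists l, 0 < l /\ derivable_pt_lim f x l.

Lemma pos_right_of_nonneg_f (x : R) :
  0 <= f x -> exists d, 0 < d /\ forall y, x < y < x + d -> 0 < f y.
Proof.
intros [Hpos|Hzero].
- destruct (continuity_pt_close f x (f x) (f_cont x) Hpos) as [d [Hd Hclose]].
  exists d; split; [exact Hd|]; intros y Hy.
  specialize (Hclose y ltac:(unfold Rabs; destruct Rcase_abs; lra)).
  apply Rabs_def2 in Hclose; lra.
- destruct (f_deriv_pos_at_zeros x (eq_sym Hzero)) as [l [Hl Hdl]].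
  destruct (derivable_pt_lim_pos_locally_increasing f x l Hdl Hl)
    as [d [Hd [Hincr _]]].
  exists d; split; [exact Hd|]; intros y Hy; rewrite Hzero; apply Hincr; exact Hy.
Qed.

Lemma neg_left_of_nonpos_f (x : R) :
  f x <= 0 -> exists d, 0 < d /\ forall y, x - d < y < x -> f y < 0.
Proof.
intros [Hneg|Hzero].
- destruct (continuity_pt_close f x (- f x) (f_cont x) ltac:(lra)) as [d [Hd Hclose]].
  exists d; split; [exact Hd|]; intros y Hy.
  specialize (Hclose y ltac:(unfold Rabs; destruct Rcase_abs; lra)).
  apply Rabs_def2 in Hclose; lra.
- destruct (f_deriv_pos_at_zeros x Hzero) as [l [Hl Hdl]].
  destruct (derivable_pt_lim_pos_locally_increasing f x l Hdl Hl)
    as [d [Hd [_ Hincr]]].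
  exists d; split; [exact Hd|]; intros y Hy; rewrite <- Hzero; apply Hincr; exact Hy.
Qed.

Let pos_after := pos_after_nonneg f pos_right_of_nonneg_f neg_left_of_nonpos_f.

Lemma zero_unique (s1 s2 : R) : f s1 = 0 -> f s2 = 0 -> s1 = s2.
Proof.
intros H1 H2.
destruct (Rtotal_order s1 s2) as [H|[H|H]]; [|exact H|].
- assert (0 < f s2) by (apply (pos_after s1); lra); lra.
- assert (0 < f s1) by (apply (pos_after s2); lra); lra.
Qed.

Lemma neg_before_zero (s1 s : R) : f s1 = 0 -> s < s1 -> f s < 0.
Proof.
intros H1 Hs; apply Rnot_le_lt; intro Hfs.
assert (0 < f s1) by (apply (pos_after s); lra); lra.
Qed.

Lemma pos_after_zero (s1 s : R) : f s1 = 0 -> s1 < s -> 0 < f s.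
Proof. intros H1 Hs; apply (pos_after s1); lra. Qed.

End PositiveDerivativeAtZeros.

Definition Knum (h tau mu : R) : R :=
  2 * (tau ^ 2 + h ^ 2 * (1 + mu ^ 2)) * tau + (h ^ 2 - 1) * (1 + mu ^ 2) * mu.

Definition Kden (h tau mu : R) : R :=
  (1 + (tau ^ 2 + mu ^ 2)) * (h ^ 2 + (tau ^ 2 + mu ^ 2)).

Lemma Kfun_num_den (h tau mu : R) : Kfun h tau mu = Knum h tau mu / Kden h tau mu.
Proof. reflexivity. Qed.

Lemma Kden_pos (h tau mu : R) : 0 < h -> 0 < Kden h tau mu.
Proof. intros Hh; unfold Kden; apply Rmult_lt_0_compat; nra. Qed.

Lemma Knum_eq0 (h tau mu : R) : 0 < h -> Kfun h tau mu = 0 -> Knum h tau mu = 0.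
Proof.
intros Hh HK; rewrite Kfun_num_den in HK.
assert (HD := Kden_pos h tau mu Hh).
replace (Knum h tau mu) with (Knum h tau mu / Kden h tau mu * Kden h tau mu)
  by (field; lra).
rewrite HK; ring.
Qed.

Section AlongSolution.

Variables (h : R) (tau mu : R -> R).

Hypothesis h_pos : 0 < h.
Hypothesis sol : is_solution h tau mu.

Lemma Kfun_solution_ex_derive (s : R) : ex_derive (fun s => Kfun h (tau s) (mu s)) s.
Proof.
assert (HD := Kden_pos h (tau s) (mu s) h_pos); unfold Kden in HD.
destruct (sol s) as [Ht Hm].
unfold Kfun; auto_derive.
repeat split; try (eexists; apply is_derive_Reals; eassumption); lra.
Qed.

Lemma Kfun_solution_derive_at_zero (s : R) :
  Kfun h (tau s) (mu s) = 0 ->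
  is_derive (fun s => Kfun h (tau s) (mu s)) s
    (2 * (3 * tau s ^ 2 + h ^ 2 * (1 + mu s ^ 2)) / Kden h (tau s) (mu s)).
Proof.
intros Hk.
destruct (sol s) as [Ht Hm].
rewrite Hk, Rmult_0_l, Rplus_0_r in Ht; rewrite Hk, Rmult_0_l, Ropp_0 in Hm.
apply is_derive_Reals in Ht; apply is_derive_Reals in Hm.
assert (HD := Kden_pos h (tau s) (mu s) h_pos).
assert (HN : is_derive (fun s => Knum h (tau s) (mu s)) s
               (2 * (3 * tau s ^ 2 + h ^ 2 * (1 + mu s ^ 2)))).
{ unfold Knum; auto_derive.
  - repeat split; eexists; eassumption.
  - replace (Derive (fun x => tau x) s) with 1
      by (symmetry; apply is_derive_unique; exact Ht).
    replace (Derive (fun x => mu x) s) with 0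
      by (symmetry; apply is_derive_unique; exact Hm).
    ring. }
assert (HD' : ex_derive (fun s => Kden h (tau s) (mu s)) s)
  by (unfold Kden; auto_derive; repeat split; eexists; eassumption).
destruct HD' as [dD HdD].
assert (Hq := is_derive_div _ _ s _ _ HN HdD ltac:(lra)).
cbv beta in Hq; rewrite (Knum_eq0 _ _ _ h_pos Hk), Rmult_0_l, Rminus_0_r in Hq.
replace (2 * (3 * tau s ^ 2 + h ^ 2 * (1 + mu s ^ 2)) / Kden h (tau s) (mu s))
  with (2 * (3 * tau s ^ 2 + h ^ 2 * (1 + mu s ^ 2)) * Kden h (tau s) (mu s)
        / Kden h (tau s) (mu s) ^ 2) by (field; lra).
exact Hq.
Qed.

Lemma Kfun_solution_continuous (s : R) :
  continuity_pt (fun s => Kfun h (tau s) (mu s)) s.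
Proof.
destruct (Kfun_solution_ex_derive s) as [l Hl].
apply derivable_continuous_pt; exists l; apply is_derive_Reals; exact Hl.
Qed.

Lemma Kfun_solution_deriv_pos_at_zeros (s : R) :
  Kfun h (tau s) (mu s) = 0 ->
  exists l, 0 < l /\ derivable_pt_lim (fun s => Kfun h (tau s) (mu s)) s l.
Proof.
intros Hk; eexists; split;
  [| apply is_derive_Reals, Kfun_solution_derive_at_zero, Hk].
apply Rdiv_lt_0_compat; [nra | apply Kden_pos, h_pos].
Qed.

End AlongSolution.

Theorem claim4 (h : R) (tau mu : R -> R) :
  0 < h ->
  is_solution h tau mu ->
  (forall s1 s2 : R,
      Kfun h (tau s1) (mu s1) = 0 -> Kfun h (tau s2) (mu s2) = 0 -> s1 = s2) /\
  (forall s1 : R, Kfun h (tau s1) (mu s1) = 0 ->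
     (forall s, s < s1 -> Kfun h (tau s) (mu s) < 0) /\
     (forall s, s1 < s -> 0 < Kfun h (tau s) (mu s))).
Proof.
intros Hh Hsol.
pose proof (Kfun_solution_continuous h tau mu Hh Hsol) as Hcont.
pose proof (Kfun_solution_deriv_pos_at_zeros h tau mu Hh Hsol) as Hderiv.
split.
- exact (zero_unique _ Hcont Hderiv).
- intros s1 H1; split; intros s Hs.
  + exact (neg_before_zero _ Hcont Hderiv s1 s H1 Hs).
  + exact (pos_after_zero _ Hcont Hderiv s1 s H1 Hs).
Qed.
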